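(* Let $b\geq 2$ be fixed. For all $\beta\in\mathbb{R}$ with $\beta\notin\mathbb{Z}$ and all $N\geq 2$, \[ \left|\sum_{\substack{1\le m\leq N\\ (\overleftarrow{m},b)=1}}e(m\beta)\right|\ll_b\frac{\log N}{\|\beta\|}. \]
   Context: For a positive integer $n$ with $L$ digits in base $b$, $n=\sum_{0\leq i<L}\varepsilon_i(n)b^i$ ($\varepsilon_i(n)\in\{0,\dots,b-1\}$, $\varepsilon_{L-1}(n)\neq0$), its digital reverse is $\overleftarrow{n}=\sum_{0\leq i<L}\varepsilon_i(n)b^{L-1-i}$. $e(x)=\exp(2\pi ix)$ and $\|x\|=\min_{n\in\mathbb{Z}}|x-n|$. *)

From Stdlib Require Import Reals Lra Lia Arith.
Open Scope R_scope.

(* Digital reversal in base b, by the accumulator recursion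
   rev_acc n acc = (reverse digits of n appended to acc); fuel >= n suffices. *)
Fixpoint rev_acc (b fuel n acc : nat) : nat :=
  match fuel with
  | O => acc
  | S f => if Nat.eqb n 0 then acc
           else rev_acc b f (Nat.div n b) (acc * b + Nat.modulo n b)%nat
  end.

Definition digrev (b n : nat) : nat := rev_acc b n n 0%nat.

Definition dist_Z (x : R) : R := Rmin (frac_part x) (1 - frac_part x).

Definition cond (b m : nat) : bool := Nat.eqb (Nat.gcd (digrev b m) b) 1.

(* real and imaginary parts of  sum_{1<=m<=N, (rev m, b)=1} e(m beta),
   e(x) = exp(2 pi i x) = cos(2 pi x) + i sin(2 pi x) *)
Definition Ssum_re (b : nat) (beta : R) (N : nat) : R :=
  sum_f_R0 (fun k => if cond b (S k) then cos (2 * PI * INR (S k) * beta) else 0)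
           (N - 1).
Definition Ssum_im (b : nat) (beta : R) (N : nat) : R :=
  sum_f_R0 (fun k => if cond b (S k) then sin (2 * PI * INR (S k) * beta) else 0)
           (N - 1).

Definition Ssum_abs (b : nat) (beta : R) (N : nat) : R :=
  sqrt (Ssum_re b beta N ^ 2 + Ssum_im b beta N ^ 2).

From Stdlib Require Import Reals Lra Lia.
From Coquelicot Require Import Complex.
Open Scope R_scope.

(* The last digit of the reverse of m is the leading digit of m, so the
   condition (rev m, b) = 1 depends only on the leading digit of m and changes
   value O(b log N) times on [0, N].  Writing e(m beta) = F m - F (m - 1) with
   F m = e((m + 1/2) beta) / (2 i sin (pi beta)), partial summation bounds the
   sum by (number of changes + 1) |F| = O(b log N) / |sin (pi beta)|, and
   |sin (pi beta)| >= ||beta|| / 2. *)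

Section DigitalReverse.

Variable b : nat.
Hypothesis hb : (2 <= b)%nat.

Lemma rev_acc_0 f acc : rev_acc b f 0 acc = acc.
Proof. destruct f; reflexivity. Qed.

Lemma rev_acc_fuel f1 f2 n acc :
  (n <= f1)%nat -> (n <= f2)%nat -> rev_acc b f1 n acc = rev_acc b f2 n acc.
Proof.
  revert f2 n acc; induction f1 as [|f1 IH]; intros f2 n acc H1 H2.
  - replace n with 0%nat by lia. now rewrite !rev_acc_0.
  - destruct f2 as [|f2]; [replace n with 0%nat by lia; reflexivity|].
    simpl. destruct (Nat.eqb_spec n 0); [reflexivity|].
    assert (Nat.div n b < n)%nat by (apply Nat.div_lt; lia).
    apply IH; lia.
Qed.

(* rev_acc b f n acc = acc * b ^ L + digrev b n, where n has L >= 1 digits. *)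
Lemma rev_acc_mod_acc f n acc acc' :
  (1 <= n <= f)%nat ->
  Nat.modulo (rev_acc b f n acc) b = Nat.modulo (rev_acc b f n acc') b.
Proof.
  revert n acc acc'; induction f as [|f IH]; intros n acc acc' Hn; [lia|].
  simpl. destruct (Nat.eqb_spec n 0); [lia|].
  assert (Nat.div n b < n)%nat by (apply Nat.div_lt; lia).
  destruct (Nat.eq_dec (Nat.div n b) 0) as [Hq|Hq].
  - rewrite Hq, !rev_acc_0, (Nat.add_comm (acc * b)), (Nat.add_comm (acc' * b)).
    now rewrite !Nat.Div0.mod_add.
  - apply IH; lia.
Qed.

Lemma digrev_mod_div m :
  (b <= m)%nat -> Nat.modulo (digrev b m) b = Nat.modulo (digrev b (Nat.div m b)) b.
Proof.
  intros Hm. unfold digrev.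
  assert (Hq : (1 <= Nat.div m b < m)%nat).
  { split; [|apply Nat.div_lt; lia].
    rewrite <- (Nat.div_same b) by lia. now apply Nat.Div0.div_le_mono. }
  destruct m as [|m]; [lia|]. cbn [rev_acc Nat.eqb].
  rewrite (rev_acc_mod_acc m _ _ 0) by lia.
  now rewrite (rev_acc_fuel m (Nat.div (S m) b)) by lia.
Qed.

Lemma cond_div m : (b <= m)%nat -> cond b m = cond b (Nat.div m b).
Proof.
  intros Hm. unfold cond.
  rewrite (Nat.gcd_comm (digrev b m)), (Nat.gcd_comm (digrev b (Nat.div m b))).
  now rewrite <- !(Nat.Lcm0.gcd_mod _ b), digrev_mod_div.
Qed.

Lemma cond_0 : cond b 0 = false.
Proof. unfold cond, digrev. simpl. apply Nat.eqb_neq. lia. Qed.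

End DigitalReverse.

Fixpoint changes (f : nat -> bool) (n : nat) : nat :=
  match n with
  | O => O
  | S k => (changes f k + if Bool.eqb (f k) (f (S k)) then 0 else 1)%nat
  end.

Lemma changes_le_mono f m n : (m <= n)%nat -> (changes f m <= changes f n)%nat.
Proof. induction 1; simpl; lia. Qed.

Section LeadingDigitInvariant.

Variables (b : nat) (f : nat -> bool).
Hypothesis hb : (2 <= b)%nat.
Hypothesis f_div : forall m, (b <= m)%nat -> f m = f (Nat.div m b).

(* For N >= b, the step N -> N + 1 can change f only if it is the step
   N / b -> N / b + 1. *)
Lemma changes_div_le N : (changes f N <= Nat.min N b + changes f (Nat.div N b))%nat.
Proof.
  induction N as [|N IH]; [simpl; lia|].
  assert (changes f (Nat.div N b) <= changes f (Nat.div (S N) b))%nat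
    by (apply changes_le_mono, Nat.Div0.div_le_mono; lia).
  destruct (Nat.lt_ge_cases N b) as [HN|HN]; [cbn [changes]; destruct (Bool.eqb _ _); lia|].
  pose proof (Nat.div_mod_eq N b). pose proof (Nat.mod_upper_bound N b ltac:(lia)).
  set (q := Nat.div N b) in *. set (r := Nat.modulo N b) in *.
  assert (Hf : f N = f q) by (apply f_div; lia).
  cbn [changes]. rewrite Hf, (f_div (S N)) by lia.
  destruct (Nat.eq_dec (S r) b) as [Hr|Hr].
  - assert (Hq : Nat.div (S N) b = S q) by (symmetry; apply (Nat.div_unique _ _ _ 0); lia).
    rewrite Hq in *. cbn [changes] in *. lia.
  - assert (Hq : Nat.div (S N) b = q)
      by (symmetry; apply (Nat.div_unique _ _ _ (S r)); lia).
    rewrite Hq, Bool.eqb_reflx. lia.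
Qed.

Lemma changes_lt_pow k N : (N < b ^ k)%nat -> (changes f N <= b * k + 1)%nat.
Proof.
  revert N; induction k as [|k IH]; intros N HN.
  - simpl in HN. replace N with 0%nat by lia. simpl. lia.
  - pose proof (changes_div_le N).
    assert (Hdiv : (Nat.div N b < b ^ k)%nat)
      by (apply Nat.Div0.div_lt_upper_bound; simpl in HN; lia).
    specialize (IH _ Hdiv). lia.
Qed.

Lemma changes_le_log2 N : (1 <= N)%nat ->
  (changes f N <= b * Nat.log2 N + b + 1)%nat.
Proof.
  intros HN. destruct (Nat.log2_spec N) as [_ HN2]; [lia|].
  assert (2 ^ S (Nat.log2 N) <= b ^ S (Nat.log2 N))%nat
    by (apply Nat.pow_le_mono_l; lia).
  pose proof (changes_lt_pow (S (Nat.log2 N)) N ltac:(lia)). lia.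
Qed.

End LeadingDigitInvariant.

Lemma ln_ge_log2_mul_ln2 n : (1 <= n)%nat -> INR (Nat.log2 n) * ln 2 <= ln (INR n).
Proof.
  intros Hn. rewrite <- ln_pow by lra.
  destruct (Nat.log2_spec n) as [Hpow _]; [lia|].
  apply le_INR in Hpow. rewrite pow_INR in Hpow. simpl (INR 2) in Hpow.
  replace (1 + 1) with 2 in Hpow by ring.
  destruct (Rle_lt_or_eq_dec _ _ Hpow) as [Hlt | ->]; [|lra].
  apply Rlt_le, ln_increasing; [apply pow_lt|]; lra.
Qed.

Lemma sin_ge_div3 u : 0 <= u <= PI / 2 -> u / 3 <= sin u.
Proof.
  intros Hu. pose proof PI_4.
  destruct (sin_bound u 0 ltac:(lra) ltac:(lra)) as [Hs _].
  replace (sin_approx u (2 * 0 + 1)) with (u - u * u * u / 6) in Hs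
    by (unfold sin_approx, sin_term; simpl; field).
  assert (u * u <= 4) by nra. nra.
Qed.

Lemma Rabs_sin_add_IZR_PI x z : Rabs (sin (x + IZR z * PI)) = Rabs (sin x).
Proof.
  rewrite sin_plus, (sin_eq_0_1 (IZR z * PI)) by now exists z.
  rewrite Rmult_0_r, Rplus_0_r, Rabs_mult, Rtrigo_facts.cos_sin_Rabs.
  rewrite (sin_eq_0_1 (IZR z * PI)) by now exists z.
  rewrite Rsqr_0, Rminus_0_r, sqrt_1. ring.
Qed.

(* With f the fractional part, |sin (pi beta)| = sin (pi f) = sin (pi ||beta||). *)
Lemma dist_Z_bounds beta : (~ exists z : Z, beta = IZR z) ->
  0 < dist_Z beta <= 2 * Rabs (sin (PI * beta)).
Proof.
  intros Hnz. unfold dist_Z. pose proof PI_RGT_0.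
  set (f := frac_part beta). destruct (base_fp beta) as [Hf0 Hf1]. fold f in Hf0, Hf1.
  assert (Hbeta : beta = f + IZR (Int_part beta)) by (unfold f, frac_part; ring).
  assert (Hf : f <> 0) by (intros E; apply Hnz; exists (Int_part beta); lra).
  assert (Habs : Rabs (sin (PI * beta)) = sin (PI * f)).
  { rewrite Hbeta, Rmult_plus_distr_l, (Rmult_comm PI (IZR _)), Rabs_sin_add_IZR_PI.
    apply Rabs_right, Rle_ge, sin_ge_0; nra. }
  assert (Hsym : sin (PI * f) = sin (PI * (1 - f))).
  { replace (PI * f) with (PI - PI * (1 - f)) by ring. apply sin_PI_x. }
  pose proof PI2_3_2. rewrite Habs.
  destruct (Rle_dec f (1 / 2)).
  - rewrite Rmin_left by lra.
    pose proof (sin_ge_div3 (PI * f) ltac:(split; nra)). split; nra.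
  - rewrite Rmin_right, Hsym by lra.
    pose proof (sin_ge_div3 (PI * (1 - f)) ltac:(split; nra)). split; nra.
Qed.

Fixpoint wsum (g : nat -> bool) (u : nat -> C) (N : nat) : C :=
  match N with
  | O => RtoC 0
  | S n => (wsum g u n + if g (S n) then u (S n) else RtoC 0)%C
  end.

Section PartialSummation.

Variables (g : nat -> bool) (u F : nat -> C) (M : R).
Hypothesis g_0 : g 0%nat = false.
Hypothesis u_antidiff : forall n, u (S n) = (F (S n) - F n)%C.
Hypothesis F_bound : forall n, Cmod (F n) <= M.

Lemma wsum_sub_last N :
  Cmod (wsum g u N - if g N then F N else RtoC 0)%C <= INR (changes g N) * M.
Proof.
  assert (HM : 0 <= M) by (eapply Rle_trans; [apply Cmod_ge_0 | apply (F_bound 0)]).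
  induction N as [|n IH].
  - simpl. rewrite g_0, Rmult_0_l.
    replace (RtoC 0 - RtoC 0)%C with (RtoC 0) by ring. rewrite Cmod_0. lra.
  - set (D := ((if g n then F n else RtoC 0) - if g (S n) then F n else RtoC 0)%C).
    assert (HD : Cmod D <= INR (if Bool.eqb (g n) (g (S n)) then 0 else 1) * M).
    { unfold D. destruct (g n), (g (S n)); simpl.
      - replace (F n - F n)%C with (RtoC 0) by ring. rewrite Cmod_0. lra.
      - replace (F n - RtoC 0)%C with (F n) by ring. rewrite Rmult_1_l. apply F_bound.
      - replace (RtoC 0 - F n)%C with (- F n)%C by ring.
        rewrite Cmod_opp, Rmult_1_l. apply F_bound.
      - replace (RtoC 0 - RtoC 0)%C with (RtoC 0) by ring. rewrite Cmod_0. lra. }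
    assert (E : (wsum g u (S n) - (if g (S n) then F (S n) else RtoC 0))%C =
                (wsum g u n - (if g n then F n else RtoC 0) + D)%C).
    { unfold D. simpl wsum. rewrite u_antidiff.
      destruct (g n), (g (S n)); ring. }
    rewrite E. eapply Rle_trans; [apply Cmod_triangle|].
    simpl changes. rewrite plus_INR. lra.
Qed.

Lemma Cmod_wsum_le N : Cmod (wsum g u N) <= (INR (changes g N) + 1) * M.
Proof.
  set (last := if g N then F N else RtoC 0).
  replace (wsum g u N) with (wsum g u N - last + last)%C by ring.
  eapply Rle_trans; [apply Cmod_triangle|].
  assert (Cmod last <= M).
  { unfold last. destruct (g N); [apply F_bound|].
    rewrite Cmod_0. eapply Rle_trans; [apply Cmod_ge_0 | apply (F_bound 0)]. }
  pose proof (wsum_sub_last N) as Hsub. fold last in Hsub. lra.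
Qed.

End PartialSummation.

Definition expC (x : R) : C := (cos (2 * PI * x), sin (2 * PI * x)).

(* F m = e((m + 1/2) beta) / (2 i sin (pi beta)), written out in coordinates. *)
Definition expC_antidiff (beta : R) (m : nat) : C :=
  (sin (2 * PI * (INR m + / 2) * beta) / (2 * sin (PI * beta)),
   - cos (2 * PI * (INR m + / 2) * beta) / (2 * sin (PI * beta))).

Lemma expC_antidiffS beta n : sin (PI * beta) <> 0 ->
  expC (INR (S n) * beta) = (expC_antidiff beta (S n) - expC_antidiff beta n)%C.
Proof.
  intros Hs. unfold expC, expC_antidiff. rewrite S_INR.
  set (a := 2 * PI * (INR n * beta + beta)). set (t := PI * beta). fold t in Hs.
  replace (2 * PI * (INR n + 1 + / 2) * beta) with (a + t) by (unfold a, t; field).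
  replace (2 * PI * (INR n + / 2) * beta) with (a - t) by (unfold a, t; field).
  replace (2 * PI * ((INR n + 1) * beta)) with a by (unfold a; ring).
  apply injective_projections; simpl;
    rewrite ?sin_plus, ?sin_minus, ?cos_plus, ?cos_minus; field; exact Hs.
Qed.

Lemma Cmod_expC_antidiff beta m : sin (PI * beta) <> 0 ->
  Cmod (expC_antidiff beta m) = / (2 * Rabs (sin (PI * beta))).
Proof.
  intros Hs. unfold Cmod, expC_antidiff; simpl.
  set (x := 2 * PI * (INR m + / 2) * beta).
  assert (Ha : 0 < Rabs (sin (PI * beta))) by now apply Rabs_pos_lt.
  rewrite <- (sqrt_pow2 (/ (2 * Rabs (sin (PI * beta))))) by (apply Rlt_le, Rinv_0_lt_compat; lra).
  f_equal.
  rewrite pow_inv, Rpow_mult_distr, pow2_abs.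
  pose proof (sin2_cos2 x) as Hpyth. unfold Rsqr in Hpyth.
  transitivity ((sin x * sin x + cos x * cos x) / (2 ^ 2 * sin (PI * beta) ^ 2));
    [|rewrite Hpyth]; field; exact Hs.
Qed.

Lemma Ssum_abs_wsum b beta N : (1 <= N)%nat ->
  Ssum_abs b beta N = Cmod (wsum (cond b) (fun m => expC (INR m * beta)) N).
Proof.
  intros HN. destruct N as [|n]; [lia|].
  unfold Ssum_abs, Ssum_re, Ssum_im, Cmod. replace (S n - 1)%nat with n by lia.
  set (w := wsum (cond b) (fun m => expC (INR m * beta))).
  enough (E : forall k,
    sum_f_R0 (fun k => if cond b (S k) then cos (2 * PI * INR (S k) * beta) else 0) k
      = fst (w (S k)) /\
    sum_f_R0 (fun k => if cond b (S k) then sin (2 * PI * INR (S k) * beta) else 0) k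
      = snd (w (S k))) by (destruct (E n) as [-> ->]; reflexivity).
  induction k as [|k [IHre IHim]]; cbn [sum_f_R0];
    change (w (S ?m)) with (w m + if cond b (S m) then expC (INR (S m) * beta) else RtoC 0)%C;
    [change (w 0%nat) with (RtoC 0) | rewrite IHre, IHim];
    destruct (cond b (S _)); unfold Cplus, expC; cbn [fst snd RtoC]; rewrite ?Rmult_assoc;
    split; ring.
Qed.

Lemma Ssum_abs_le_changes b beta N : (2 <= b)%nat -> sin (PI * beta) <> 0 ->
  (1 <= N)%nat ->
  Ssum_abs b beta N <= (INR (changes (cond b) N) + 1) / (2 * Rabs (sin (PI * beta))).
Proof.
  intros hb Hs HN. rewrite Ssum_abs_wsum by exact HN.
  apply (Cmod_wsum_le _ _ (expC_antidiff beta)).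
  - now apply cond_0.
  - intros n. now apply expC_antidiffS.
  - intros n. now rewrite Cmod_expC_antidiff.
Qed.

Theorem lemma4p6 (b : nat) (hb : (2 <= b)%nat) :
  exists C : R, 0 < C /\
    forall (beta : R) (N : nat),
      (~ exists z : Z, beta = IZR z) ->
      (2 <= N)%nat ->
      Ssum_abs b beta N <= C * ln (INR N) / dist_Z beta.
Proof.
  assert (Hln2 : 0 < ln 2) by (rewrite <- ln_1; apply ln_increasing; lra).
  assert (Hb : 2 <= INR b) by (apply (le_INR 2) in hb; simpl in hb; lra).
  exists ((2 * INR b + 2) / ln 2). split; [apply Rdiv_lt_0_compat; lra|].
  intros beta N Hnz HN.
  destruct (dist_Z_bounds beta Hnz) as [Hd Hds].
  assert (Hs : sin (PI * beta) <> 0) by (intros E; rewrite E, Rabs_R0 in Hds; lra).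
  assert (HL : 1 <= INR (Nat.log2 N)).
  { apply (le_INR 1). change 1%nat with (Nat.log2 2). now apply Nat.log2_le_mono. }
  assert (Hchanges : INR (changes (cond b) N) + 1 <= (2 * INR b + 2) * INR (Nat.log2 N)).
  { pose proof (changes_le_log2 b (cond b) hb (cond_div b hb) N ltac:(lia)) as H.
    apply le_INR in H. rewrite !plus_INR, mult_INR in H. simpl (INR 1) in H. nra. }
  pose proof (ln_ge_log2_mul_ln2 N ltac:(lia)) as Hlog.
  eapply Rle_trans; [apply Ssum_abs_le_changes; auto; lia|].
  unfold Rdiv. apply Rmult_le_compat.
  - pose proof (pos_INR (changes (cond b) N)). lra.
  - apply Rlt_le, Rinv_0_lt_compat. lra.
  - apply (Rmult_le_reg_r (ln 2)); [lra|]. field_simplify; nra.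
  - apply Rinv_le_contravar; lra.
Qed.
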